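(* Let $\mathcal{D}(\rho)=p_0\rho+p_1X\rho X+p_2Y\rho Y+p_3Z\rho Z$ and $\mathcal{E}(\rho)=q_0\rho+q_1X\rho X+q_2Y\rho Y+q_3Z\rho Z$ be arbitrary single-qubit Pauli channels. The entanglement-assisted quantum communication capacity over a quantum trajectory is $$Q_{\text{E,Q}}=\frac{C_{\text{E,Q}}}{2}=1+\frac12\Big[H(\alpha)+A_0\log_2A_0+\sum_{k=1}^3A_k^+\log_2A_k^++\sum_{k=1}^3A_k^-\log_2A_k^-\Big],$$ where $A_0=p_0q_0+p_1q_1+p_2q_2+p_3q_3$, $A_1^+=p_0q_1+p_1q_0$, $A_2^+=p_0q_2+p_2q_0$, $A_3^+=p_0q_3+p_3q_0$, $A_1^-=p_2q_3+p_3q_2$, $A_2^-=p_3q_1+p_1q_3$, $A_3^-=p_1q_2+p_2q_1$, $\alpha=A_0+A_1^++A_2^++A_3^+$, and $H(\alpha)=-\alpha\log_2\alpha-(1-\alpha)\log_2(1-\alpha)$.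
   Context: $X,Y,Z$ are Pauli matrices, $\sigma_0=I,\sigma_1=X,\sigma_2=Y,\sigma_3=Z$; $(p_i),(q_i)$ are probability vectors; $|\pm\rangle=(|0\rangle\pm|1\rangle)/\sqrt2$; $0\log_20=0$. For a Pauli channel $\mathcal{N}(\rho)=\sum_ir_i\sigma_i\rho\sigma_i$, the entanglement-assisted classical capacity (superdense coding, pre-shared EPR pair, equiprobable inputs) is $C_E(\mathcal{N})=2+\sum_ir_i\log_2r_i$, and the entanglement-assisted quantum capacity is taken, via the superdense coding/teleportation trade-off, to be $Q_E=C_E/2$. Quantum trajectory: with $D_i=\sqrt{p_i}\sigma_i$, $E_j=\sqrt{q_j}\sigma_j$, the switched channel on data $\rho$ and control $\omega=|+\rangle\langle+|$ is $\sum_{i,j}W_{i,j}(\rho\otimes\omega)W_{i,j}^\dagger$ with $W_{i,j}=E_jD_i\otimes|0\rangle\langle0|+D_iE_j\otimes|1\rangle\langle1|$. Its output has the form $p_+\mathcal{S}_+(\rho)\otimes|+\rangle\langle+|+p_-\mathcal{S}_-(\rho)\otimes|-\rangle\langle-|$ (commuting Kraus pairs go to the $|+\rangle$ branch, anticommuting pairs to the $|-\rangle$ branch), with $\mathcal{S}_\pm$ normalized Pauli channels; $C_{\text{E,Q}}=p_+C_E(\mathcal{S}_+)+p_-C_E(\mathcal{S}_-)$ (a zero-probability branch contributes zero) and $Q_{\text{E,Q}}$ is the corresponding quantum capacity. *)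

From HB Require Import structures.
From mathcomp Require Import all_boot all_order all_algebra all_field.
From mathcomp Require Import boolp reals exp.
Set Implicit Arguments. Unset Strict Implicit. Unset Printing Implicit Defensive.
Import Order.TTheory GRing.Theory Num.Theory.
Local Open Scope ring_scope.

Definition pauliX : 'M[algC]_2 := \matrix_(a < 2, b < 2) (if a == b then 0 else 1).
Definition pauliY : 'M[algC]_2 :=
  \matrix_(a < 2, b < 2)
    (if a == b then 0 else if (a : nat) == 0%N then - 'i else 'i).
Definition pauliZ : 'M[algC]_2 :=
  \matrix_(a < 2, b < 2) (if a == b then (if (a : nat) == 0%N then 1 else -1) else 0).
Definition pauli (k : 'I_4) : 'M[algC]_2 :=
  match val k with
  | 0%N => 1%:M | 1%N => pauliX | 2%N => pauliY | _ => pauliZ end.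

Definition commuteb (i j : 'I_4) : bool :=
  pauli j *m pauli i == pauli i *m pauli j.

Definition prop_to (M : 'M[algC]_2) (k : 'I_4) : bool :=
  `[< exists c : algC, c != 0 /\ M = c *: pauli k >].

Section Trajectory.
Variable R : realType.

Definition log2 (x : R) : R := ln x / ln 2.
Definition xlog2 (x : R) : R := if x == 0 then 0 else x * log2 x.
Definition binH (a : R) : R := - xlog2 a - xlog2 (1 - a).

Definition prob_vec (p : 'I_4 -> R) : Prop :=
  (forall i, 0 <= p i) /\ \sum_(i < 4) p i = 1.

(* Entanglement-assisted classical capacity of the Pauli channel with weights r *)
Definition CE (r : 'I_4 -> R) : R := 2 + \sum_(k < 4) xlog2 (r k).

(* Branch probabilities of the switched channel: s = true is the |+> branch
   (commuting Kraus pairs), s = false the |-> branch (anticommuting pairs). *)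
Definition branch_prob (p q : 'I_4 -> R) (s : bool) : R :=
  \sum_(i < 4) \sum_(j < 4) (if commuteb i j == s then p i * q j else 0).

Definition branch_weight (p q : 'I_4 -> R) (s : bool) (k : 'I_4) : R :=
  \sum_(i < 4) \sum_(j < 4)
     (if (commuteb i j == s) && prop_to (pauli j *m pauli i) k
      then p i * q j else 0).

Definition branch_chan (p q : 'I_4 -> R) (s : bool) (k : 'I_4) : R :=
  branch_weight p q s k / branch_prob p q s.

Definition branch_contrib (p q : 'I_4 -> R) (s : bool) : R :=
  if branch_prob p q s == 0 then 0
  else branch_prob p q s * CE (branch_chan p q s).

Definition CEQ (p q : 'I_4 -> R) : R := branch_contrib p q true + branch_contrib p q false.
Definition QEQ (p q : 'I_4 -> R) : R := CEQ p q / 2.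

End Trajectory.

Definition o0 : 'I_4 := @Ordinal 4 0 isT.
Definition o1 : 'I_4 := @Ordinal 4 1 isT.
Definition o2 : 'I_4 := @Ordinal 4 2 isT.
Definition o3 : 'I_4 := @Ordinal 4 3 isT.

From HB Require Import structures.
From mathcomp Require Import all_boot all_order all_algebra all_field.
From mathcomp Require Import boolp reals exp.
From mathcomp Require Import ring lra.
Import Order.TTheory GRing.Theory Num.Theory.
Local Open Scope ring_scope.

(* Up to a phase, the Pauli matrices multiply like the Klein four-group, and
   two of them commute iff one is the identity or they are equal.  Hence the
   product E_j D_i is proportional to exactly one Pauli matrix, and the
   weights of the two branches are the A_0, A_k^+ (|+> branch) and A_k^-
   (|-> branch).  A branch of probability P with weights w contributes
   2P + sum_k w_k log w_k - P log P to C_E,Q; the branch probabilities are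
   alpha and 1 - alpha, so the two -P log P terms add up to H(alpha). *)

Lemma sum_ord4 (V : nmodType) (F : 'I_4 -> V) :
  \sum_(i < 4) F i = F o0 + F o1 + F o2 + F o3.
Proof.
rewrite !big_ord_recl big_ord0 addr0 !addrA.
by congr (_ + _ + _ + _); congr F; apply: val_inj.
Qed.

Definition pauli_index (i j : 'I_4) : 'I_4 :=
  match val i, val j with
  | 0%N, _ => j | _, 0%N => i
  | 1%N, 1%N | 2%N, 2%N | 3%N, 3%N => o0
  | 1%N, 2%N | 2%N, 1%N => o3
  | 1%N, 3%N | 3%N, 1%N => o2
  | _, _ => o1 end.

Definition pauli_phase (i j : 'I_4) : algC :=
  match val i, val j with
  | 1%N, 2%N => - 'i | 2%N, 1%N => 'i
  | 1%N, 3%N => 'i | 3%N, 1%N => - 'i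
  | 2%N, 3%N => - 'i | 3%N, 2%N => 'i
  | _, _ => 1 end.

Definition pauli_comm (i j : 'I_4) : bool := [|| i == o0, j == o0 | i == j].

Lemma mul_pauli i j :
  pauli j *m pauli i = pauli_phase i j *: pauli (pauli_index i j).
Proof.
have ii : 'i * 'i = -1 :> algC by rewrite -expr2 sqrCi.
case: i => [[|[|[|[|i]]]] Hi] //; case: j => [[|[|[|[|j]]]] Hj] //;
apply/matrixP => a b; rewrite !mxE !big_ord_recl big_ord0 !mxE;
case: a => [[|[|a]] Ha] //; case: b => [[|[|b]] Hb] //=;
by rewrite ?mxE /= ?(mul0r, mulr0, mul1r, mulr1, add0r, addr0, mulrN, mulNr,
  opprK, ii).
Qed.

Lemma pauli_indexC i j : pauli_index i j = pauli_index j i.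
Proof.
by case: i => [[|[|[|[|i]]]] Hi] //; case: j => [[|[|[|[|j]]]] Hj] //;
  apply: val_inj.
Qed.

Lemma pauli_index_eq0 i j : (pauli_index i j == o0) = (i == j).
Proof.
by case: i => [[|[|[|[|i]]]] Hi] //; case: j => [[|[|[|[|j]]]] Hj].
Qed.

Lemma pauli_index_eq i j k : (pauli_index i j == k) = (j == pauli_index i k).
Proof.
by case: i => [[|[|[|[|i]]]] Hi] //; case: j => [[|[|[|[|j]]]] Hj] //;
  case: k => [[|[|[|[|k]]]] Hk].
Qed.

Lemma pauli_phase_neq0 i j : pauli_phase i j != 0.
Proof.
by case: i => [[|[|[|[|i]]]] Hi] //; case: j => [[|[|[|[|j]]]] Hj] //=;
  rewrite ?oppr_eq0 ?neq0Ci ?oner_eq0.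
Qed.

Lemma pauli_sqr k : pauli k *m pauli k = 1%:M.
Proof. by rewrite mul_pauli; case: k => [[|[|[|[|k]]]] Hk] //=; rewrite scale1r. Qed.

Lemma pauli_neq0 k : pauli k != 0.
Proof.
apply/eqP => k0; have := congr1 (fun M : 'M[algC]_2 => M 0 0) (pauli_sqr k).
by rewrite k0 mul0mx !mxE /=; move/eqP; rewrite eq_sym oner_eq0.
Qed.

Lemma mxtrace_pauli k : k != o0 -> \tr (pauli k) = 0.
Proof.
rewrite /mxtrace !big_ord_recl big_ord0.
by case: k => [[|[|[|[|k]]]] Hk] //= _; rewrite !mxE /= ?addr0 ?subrr.
Qed.

Lemma commuteb_pauli i j : commuteb i j = pauli_comm i j.
Proof.
have i_neqN : ('i == - 'i :> algC) = false.
  by apply/negbTE; rewrite -addr_eq0 -mulr2n mulrn_eq0 neq0Ci.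
rewrite /commuteb !mul_pauli [pauli_index j i]pauli_indexC -subr_eq0 -scalerBl.
rewrite scaler_eq0 (negbTE (pauli_neq0 _)) orbF subr_eq0.
by case: i => [[|[|[|[|i]]]] Hi] //; case: j => [[|[|[|[|j]]]] Hj] //=;
  rewrite ?eqxx ?i_neqN // eq_sym i_neqN.
Qed.

(* Distinct Pauli matrices are not proportional: multiplying by sigma_k and
   taking traces kills the left-hand side but not the right-hand side. *)
Lemma prop_to_pauli (c : algC) m k : c != 0 -> prop_to (c *: pauli m) k = (m == k).
Proof.
move=> c_neq0; have [<-|m_neq_k] := eqVneq m k; apply/asboolP; first by exists c.
move=> [d [d_neq0 /(congr1 (fun M => \tr (M *m pauli k)))]].
rewrite -!scalemxAl pauli_sqr mul_pauli !mxtraceZ mxtrace1.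
rewrite mxtrace_pauli ?pauli_index_eq0 1?eq_sym // !mulr0 => /esym/eqP.
by rewrite mulf_eq0 (negbTE d_neq0) pnatr_eq0.
Qed.

Lemma prop_to_pauli_product i j k :
  prop_to (pauli j *m pauli i) k = (pauli_index i j == k).
Proof. by rewrite mul_pauli prop_to_pauli ?pauli_phase_neq0. Qed.

Section Capacity.
Variable R : realType.

Lemma xlog2_0 : xlog2 (0 : R) = 0.
Proof. by rewrite /xlog2 eqxx. Qed.

Lemma xlog2_div (P w : R) : 0 < P -> 0 <= w ->
  P * xlog2 (w / P) = xlog2 w - w * log2 P.
Proof.
move=> P_gt0 w_ge0; rewrite /xlog2.
have [->|w_neq0] := eqVneq w 0; first by rewrite mul0r eqxx mulr0 mul0r subr0.
have w_gt0 : 0 < w by rewrite lt_neqAle eq_sym w_neq0.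
rewrite mulf_eq0 invr_eq0 (negbTE w_neq0) gt_eqF //= /log2 ln_div ?posrE //.
have ln2_neq0 : ln (2 : R) != 0 by rewrite gt_eqF // ln_gt0 // ltr1n.
by field; rewrite ln2_neq0 gt_eqF.
Qed.

Lemma CE_normalized (P : R) (w : 'I_4 -> R) :
  (forall k, 0 <= w k) -> \sum_k w k = P ->
  (if P == 0 then 0 else P * CE (fun k => w k / P)) =
  2 * P + \sum_k xlog2 (w k) - xlog2 P.
Proof.
move=> w_ge0 sum_w.
have [P0|P_neq0] := eqVneq P 0.
  have w0 k : w k = 0.
    by apply/eqP; move/eqP: P0; rewrite -sum_w psumr_eq0 // => /allP/(_ k (mem_index_enum k)).
  by rewrite P0 xlog2_0 big1 ?mulr0 ?addr0 ?subr0 // => k _; rewrite w0 xlog2_0.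
have P_gt0 : 0 < P by rewrite lt_neqAle eq_sym P_neq0 -sum_w sumr_ge0.
rewrite /CE mulrDr mulr_sumr (eq_bigr _ (fun k _ => @xlog2_div P _ P_gt0 (w_ge0 k))).
by rewrite sumrB -mulr_suml sum_w /xlog2 (negbTE P_neq0) mulrC; ring.
Qed.

Variables p q : 'I_4 -> R.

Lemma branch_weightE s k :
  branch_weight p q s k =
  \sum_i (if pauli_comm i (pauli_index i k) == s
          then p i * q (pauli_index i k) else 0).
Proof.
apply: eq_bigr => i _; rewrite (bigD1 (pauli_index i k)) //=.
rewrite commuteb_pauli prop_to_pauli_product pauli_index_eq eqxx andbT.
rewrite big1 ?addr0 // => j /negbTE j_neq.
by rewrite prop_to_pauli_product pauli_index_eq j_neq andbF.
Qed.

Lemma branch_prob_sum_weight s : branch_prob p q s = \sum_k branch_weight p q s k.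
Proof.
rewrite exchange_big; apply: eq_bigr => i _; rewrite exchange_big.
apply: eq_bigr => j _; rewrite (bigD1 (pauli_index i j)) //= big1 => [|k].
  by rewrite prop_to_pauli_product eqxx andbT addr0.
by rewrite prop_to_pauli_product eq_sym => /negbTE->; rewrite andbF.
Qed.

Lemma branch_prob_total :
  branch_prob p q true + branch_prob p q false = (\sum_i p i) * (\sum_j q j).
Proof.
rewrite -big_split big_distrlr; apply: eq_bigr => i _.
by rewrite -big_split; apply: eq_bigr => j _ /=; case: commuteb; rewrite ?addr0 ?add0r.
Qed.

Hypotheses (p_ge0 : forall i, 0 <= p i) (q_ge0 : forall j, 0 <= q j).

Lemma branch_contribE s :
  branch_contrib p q s = 2 * branch_prob p q s
    + \sum_k xlog2 (branch_weight p q s k) - xlog2 (branch_prob p q s).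
Proof.
apply: CE_normalized; last by rewrite branch_prob_sum_weight.
move=> k; apply: sumr_ge0 => i _; apply: sumr_ge0 => j _.
by case: ifP => // _; apply: mulr_ge0.
Qed.

End Capacity.

Theorem corollary8 (R : realType) (p q : 'I_4 -> R) :
  prob_vec p -> prob_vec q ->
  let A0 := p o0 * q o0 + p o1 * q o1 + p o2 * q o2 + p o3 * q o3 in
  let A1p := p o0 * q o1 + p o1 * q o0 in
  let A2p := p o0 * q o2 + p o2 * q o0 in
  let A3p := p o0 * q o3 + p o3 * q o0 in
  let A1m := p o2 * q o3 + p o3 * q o2 in
  let A2m := p o3 * q o1 + p o1 * q o3 in
  let A3m := p o1 * q o2 + p o2 * q o1 in
  let alpha := A0 + A1p + A2p + A3p in
  QEQ p q = CEQ p q / 2 /\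
  QEQ p q = 1 + 2^-1 * (binH alpha + xlog2 A0
                         + (xlog2 A1p + xlog2 A2p + xlog2 A3p)
                         + (xlog2 A1m + xlog2 A2m + xlog2 A3m)).
Proof.
move=> [p_ge0 sum_p] [q_ge0 sum_q] A0 A1p A2p A3p A1m A2m A3m alpha.
split=> //.
have total := @branch_prob_total _ p q; rewrite sum_p sum_q mulr1 in total.
rewrite /QEQ /CEQ !branch_contribE // !branch_prob_sum_weight in total *.
rewrite !sum_ord4 !branch_weightE !sum_ord4 /pauli_index /= !addr0 !add0r in total *.
rewrite [p o1 * q o3 + _]addrC -/A0 -/A1p -/A2p -/A3p -/A1m -/A2m -/A3m -/alpha in total *.
clearbody A0 A1p A2p A3p A1m A2m A3m alpha.
have -> : A1m + A2m + A3m = 1 - alpha by lra.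
by rewrite /binH xlog2_0; lra.
Qed.
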